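(* Let $X$ be a real Banach lattice which is convex-transitive and such that every surjective linear isometry $T: X\to X$ is disjointness-preserving. If there exists an atom $x\in S_X$, then $X$ is one-dimensional.
   Context: $X$ is convex-transitive if $\overline{\mathrm{conv}}(\{T(y):T\in\mathcal{G}_X\})=B_X$ for every $y\in S_X$, where $\mathcal{G}_X$ is the group of surjective linear isometries of $X$. Elements $x,y$ are disjoint if $|x|\wedge|y|=0$; $T$ is disjointness-preserving if $T(x),T(y)$ are disjoint whenever $x,y$ are. A point $a\neq0$ is an atom if $\{v\in X: 0\le v\le|a|\}=\{\lambda|a|: 0\le\lambda\le1\}$. *)

From Stdlib Require Import Reals List.
Open Scope R_scope.

Record BanachLattice := {
  BL :> Type;
  zero : BL;
  add : BL -> BL -> BL;
  opp : BL -> BL;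
  scal : R -> BL -> BL;
  norm : BL -> R;
  le : BL -> BL -> Prop;
  join : BL -> BL -> BL;
  meet : BL -> BL -> BL;
  add_assoc : forall x y z, add x (add y z) = add (add x y) z;
  add_comm : forall x y, add x y = add y x;
  add_zero_l : forall x, add zero x = x;
  add_opp_r : forall x, add x (opp x) = zero;
  scal_assoc : forall a b x, scal a (scal b x) = scal (a * b) x;
  scal_one : forall x, scal 1 x = x;
  scal_add_distr_l : forall a x y, scal a (add x y) = add (scal a x) (scal a y);
  scal_add_distr_r : forall a b x, scal (a + b) x = add (scal a x) (scal b x);
  norm_zero_iff : forall x, norm x = 0 <-> x = zero;
  norm_triangle : forall x y, norm (add x y) <= norm x + norm y;
  norm_scal : forall a x, norm (scal a x) = Rabs a * norm x;
  norm_complete : forall u : nat -> BL,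
    (forall eps, eps > 0 -> exists N, forall m n, (m >= N)%nat -> (n >= N)%nat ->
        norm (add (u m) (opp (u n))) < eps) ->
    exists l, forall eps, eps > 0 -> exists N, forall n, (n >= N)%nat ->
        norm (add (u n) (opp l)) < eps;
  le_refl : forall x, le x x;
  le_trans : forall x y z, le x y -> le y z -> le x z;
  le_antisym : forall x y, le x y -> le y x -> x = y;
  le_add : forall x y z, le x y -> le (add x z) (add y z);
  le_scal : forall a x y, 0 <= a -> le x y -> le (scal a x) (scal a y);
  join_ub_l : forall x y, le x (join x y);
  join_ub_r : forall x y, le y (join x y);
  join_lub : forall x y z, le x z -> le y z -> le (join x y) z;
  meet_lb_l : forall x y, le (meet x y) x;
  meet_lb_r : forall x y, le (meet x y) y;
  meet_glb : forall x y z, le z x -> le z y -> le z (meet x y);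
  norm_mono : forall x y, le (join x (opp x)) (join y (opp y)) -> norm x <= norm y
}.

Arguments zero {b0}.
Arguments add {b0}.
Arguments opp {b0}.
Arguments scal {b0}.
Arguments norm {b0}.
Arguments le {b0}.
Arguments join {b0}.
Arguments meet {b0}.

Section Defs.
Variable X : BanachLattice.

Definition sub (x y : X) : X := add x (opp y).

Definition absv (x : X) : X := join x (opp x).

Definition is_linear (T : X -> X) : Prop :=
  (forall x y, T (add x y) = add (T x) (T y)) /\
  (forall a x, T (scal a x) = scal a (T x)).

Definition surj_lin_isometry (T : X -> X) : Prop :=
  is_linear T /\ (forall y, exists x, T x = y) /\ (forall x, norm (T x) = norm x).

Definition lin_comb (l : list (R * X)) : X :=
  fold_right (fun p acc => add (scal (fst p) (snd p)) acc) zero l.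

Definition conv (S : X -> Prop) (z : X) : Prop :=
  exists l : list (R * X),
    (forall p, In p l -> 0 <= fst p /\ S (snd p)) /\
    fold_right Rplus 0 (map fst l) = 1 /\
    z = lin_comb l.

Definition closure (S : X -> Prop) (z : X) : Prop :=
  forall eps, eps > 0 -> exists w, S w /\ norm (sub z w) < eps.

Definition convex_transitive : Prop :=
  forall y : X, norm y = 1 ->
    forall z : X,
      closure (conv (fun w => exists T, surj_lin_isometry T /\ w = T y)) z
      <-> norm z <= 1.

Definition disjoint (x y : X) : Prop := meet (absv x) (absv y) = zero.

Definition disjointness_preserving (T : X -> X) : Prop :=
  forall x y, disjoint x y -> disjoint (T x) (T y).

Definition atom (a : X) : Prop :=
  a <> zero /\
  forall v : X, (le zero v /\ le v (absv a)) <->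
                exists lam, 0 <= lam <= 1 /\ v = scal lam (absv a).

Definition one_dimensional : Prop :=
  exists e : X, e <> zero /\ forall x : X, exists lam, x = scal lam e.

End Defs.

From Stdlib Require Import Reals Lra List Classical ClassicalEpsilon.
Open Scope R_scope.

(** Let [a = |x|] be the positive normalised atom, and let [a^⊥] be the set
    of elements disjoint from [a].  Since [a] is an atom and [R] is complete,
    every positive [u] splits as [u = mu a + r] with [r] in [a^⊥]
    ([atom_projection]); so if [a^⊥ = 0] then [X = R a].  Otherwise pick
    [w] in [a^⊥] of norm one, put [n = ||a + w||] and [z = (a + w)/n].
    - Isometries preserve and reflect disjointness and [a] cannot be split
      into two nonzero disjoint pieces, so every isometry maps [a] to [a],
      [-a] or into [a^⊥] ([orbit_of_atom]).  Hence convex combinations of the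
      orbit of [a] have the form [s a + k], [k ∈ a^⊥], [|s| + ||k|| <= 1];
      approximating [z] by them gives [n >= 2] ([two_le_norm_sum]).
    - [T z = (T a + T w)/n] is a sum of two disjoint elements of norm [1/n],
      so [|T z|] dominates [t a] only for [t <= 1/n], and the same holds for
      convex combinations of the orbit of [z]; approximating [a] by them
      forces [n < 2] ([norm_sum_lt_two]). *)

Arguments add_assoc {b0} x y z.
Arguments add_comm {b0} x y.
Arguments add_zero_l {b0} x.
Arguments add_opp_r {b0} x.
Arguments scal_assoc {b0} a b x.
Arguments scal_one {b0} x.
Arguments scal_add_distr_l {b0} a x y.
Arguments scal_add_distr_r {b0} a b x.
Arguments norm_zero_iff {b0} x.
Arguments norm_triangle {b0} x y.
Arguments norm_scal {b0} a x.
Arguments le_refl {b0} x.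
Arguments le_trans {b0} x y z.
Arguments le_antisym {b0} x y.
Arguments le_add {b0} x y z.
Arguments le_scal {b0} a x y.
Arguments join_ub_l {b0} x y.
Arguments join_ub_r {b0} x y.
Arguments join_lub {b0} x y z.
Arguments meet_lb_l {b0} x y.
Arguments meet_lb_r {b0} x y.
Arguments meet_glb {b0} x y z.
Arguments norm_mono {b0} x y.

Section VectorLattice.
Context {X : BanachLattice}.
Local Notation ab := (absv X).
Implicit Types x y z u v w p q : X.

Lemma add_zero_r x : add x zero = x.
Proof. rewrite add_comm; apply add_zero_l. Qed.

Lemma add_opp_l x : add (opp x) x = zero.
Proof. rewrite add_comm; apply add_opp_r. Qed.

Lemma add_cancel_r x y z : add x z = add y z -> x = y.
Proof.
  intro H. rewrite <- (add_zero_r x), <- (add_zero_r y), <- (add_opp_r z),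
    !add_assoc, H; reflexivity.
Qed.

Lemma add_subK x y : add (add x y) (opp y) = x.
Proof. rewrite <- add_assoc, add_opp_r, add_zero_r. reflexivity. Qed.

Lemma add_subKr x y : add (add x (opp y)) y = x.
Proof. rewrite <- add_assoc, add_opp_l, add_zero_r. reflexivity. Qed.

Lemma add_swap x y z : add x (add y z) = add y (add x z).
Proof. rewrite !add_assoc, (add_comm x y). reflexivity. Qed.

Lemma add_addACA x y z w : add (add x y) (add z w) = add (add x z) (add y w).
Proof. rewrite <- !add_assoc, (add_swap y). reflexivity. Qed.

Lemma opp_uniq x y : add x y = zero -> y = opp x.
Proof.
  intro H. apply (add_cancel_r _ _ x). rewrite (add_comm y), H, add_opp_l.
  reflexivity.
Qed.

Lemma opp_opp x : opp (opp x) = x.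
Proof. symmetry. apply opp_uniq, add_opp_l. Qed.

Lemma opp_zero : opp (zero : X) = zero.
Proof. symmetry; apply opp_uniq, add_zero_l. Qed.

Lemma scal_zero_l x : scal 0 x = zero.
Proof.
  apply (add_cancel_r _ _ (scal 0 x)).
  rewrite <- scal_add_distr_r, add_zero_l, Rplus_0_l. reflexivity.
Qed.

Lemma scal_zero_r t : scal t (zero : X) = zero.
Proof.
  apply (add_cancel_r _ _ (scal t zero)).
  rewrite <- scal_add_distr_l, !add_zero_l. reflexivity.
Qed.

Lemma scal_opp_l t x : scal (- t) x = opp (scal t x).
Proof.
  apply opp_uniq. rewrite <- scal_add_distr_r, Rplus_opp_r. apply scal_zero_l.
Qed.

Lemma scal_m1 x : scal (-1) x = opp x.
Proof.
  replace (-1) with (- (1)) by ring. rewrite scal_opp_l, scal_one. reflexivity.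
Qed.

Lemma opp_add x y : opp (add x y) = add (opp x) (opp y).
Proof. rewrite <- !scal_m1. apply scal_add_distr_l. Qed.

Lemma scal_opp_r t x : scal t (opp x) = opp (scal t x).
Proof. rewrite <- !scal_m1, !scal_assoc, Rmult_comm. reflexivity. Qed.

Lemma scal_inv_l t x : t <> 0 -> scal (/ t) (scal t x) = x.
Proof. intro H. rewrite scal_assoc, Rinv_l by exact H. apply scal_one. Qed.

Lemma scal_inv_r t x : t <> 0 -> scal t (scal (/ t) x) = x.
Proof. intro H. rewrite scal_assoc, Rinv_r by exact H. apply scal_one. Qed.

Lemma norm_opp x : norm (opp x) = norm x.
Proof.
  rewrite <- scal_m1, norm_scal, Rabs_left by lra. ring.
Qed.

Lemma norm_zero : norm (zero : X) = 0.
Proof. apply norm_zero_iff. reflexivity. Qed.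

Lemma norm_nonneg x : 0 <= norm x.
Proof.
  pose proof (norm_triangle x (opp x)) as H.
  rewrite add_opp_r, norm_zero, norm_opp in H. lra.
Qed.

Lemma le_add_l x y z : le x y -> le (add z x) (add z y).
Proof. intro H. rewrite (add_comm z x), (add_comm z y). apply le_add, H. Qed.

Lemma le_add2 x y z w : le x y -> le z w -> le (add x z) (add y w).
Proof.
  intros H1 H2. apply le_trans with (add y z).
  - apply le_add, H1.
  - apply le_add_l, H2.
Qed.

Lemma le_opp x y : le x y -> le (opp y) (opp x).
Proof.
  intro H. pose proof (le_add _ _ (add (opp x) (opp y)) H) as H'.
  rewrite (add_assoc x), add_opp_r, add_zero_l, (add_swap y), add_opp_r,
    add_zero_r in H'.
  exact H'.
Qed.

Lemma le_sub0 x y : le x y -> le zero (add y (opp x)).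
Proof. intro H. rewrite <- (add_opp_r x). apply le_add, H. Qed.

Lemma le_sub0_inv x y : le zero (add y (opp x)) -> le x y.
Proof.
  intro H. apply (le_add _ _ x) in H. rewrite add_zero_l, add_subKr in H.
  exact H.
Qed.

Lemma le_scal_nonneg t x : 0 <= t -> le zero x -> le zero (scal t x).
Proof. intros. rewrite <- (scal_zero_r t). apply le_scal; auto. Qed.

Lemma le_scal_r x s t : le zero x -> s <= t -> le (scal s x) (scal t x).
Proof.
  intros Hx Hst. apply le_sub0_inv.
  rewrite <- scal_opp_l, <- scal_add_distr_r. apply le_scal_nonneg; auto. lra.
Qed.

Lemma le_scal_inv t x y : 0 < t -> le (scal t x) (scal t y) -> le x y.
Proof.
  intros Ht H. apply (le_scal (/ t)) in H.
  - rewrite !scal_inv_l in H by lra. exact H.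
  - left; apply Rinv_0_lt_compat, Ht.
Qed.

Lemma join_comm x y : join x y = join y x.
Proof. apply le_antisym; apply join_lub; auto using join_ub_l, join_ub_r. Qed.

Lemma meet_comm x y : meet x y = meet y x.
Proof. apply le_antisym; apply meet_glb; auto using meet_lb_l, meet_lb_r. Qed.

Lemma join_of_le x y : le x y -> join x y = y.
Proof.
  intro H. apply le_antisym.
  - apply join_lub; auto using le_refl.
  - apply join_ub_r.
Qed.

Lemma meet_of_le x y : le x y -> meet x y = x.
Proof.
  intro H. apply le_antisym.
  - apply meet_lb_l.
  - apply meet_glb; auto using le_refl.
Qed.

Lemma meet_mono x y x' y' : le x x' -> le y y' -> le (meet x y) (meet x' y').
Proof.
  intros. apply meet_glb.
  - apply le_trans with x; auto using meet_lb_l.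
  - apply le_trans with y; auto using meet_lb_r.
Qed.

Lemma join_add x y z : add (join x y) z = join (add x z) (add y z).
Proof.
  apply le_antisym.
  - set (J := join (add x z) (add y z)).
    assert (H : le (join x y) (add J (opp z))).
    { apply join_lub.
      + rewrite <- (add_subK x z). apply le_add, join_ub_l.
      + rewrite <- (add_subK y z). apply le_add, join_ub_r. }
    apply (le_add _ _ z) in H. rewrite add_subKr in H. exact H.
  - apply join_lub; apply le_add; auto using join_ub_l, join_ub_r.
Qed.

Lemma opp_join x y : opp (join x y) = meet (opp x) (opp y).
Proof.
  apply le_antisym.
  - apply meet_glb; apply le_opp; auto using join_ub_l, join_ub_r.
  - rewrite <- (opp_opp (meet _ _)). apply le_opp, join_lub.
    + rewrite <- (opp_opp x) at 1. apply le_opp, meet_lb_l.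
    + rewrite <- (opp_opp y) at 1. apply le_opp, meet_lb_r.
Qed.

Lemma opp_meet x y : opp (meet x y) = join (opp x) (opp y).
Proof.
  rewrite <- (opp_opp x), <- (opp_opp y) at 1.
  rewrite <- opp_join, opp_opp. reflexivity.
Qed.

Lemma meet_add x y z : add (meet x y) z = meet (add x z) (add y z).
Proof.
  rewrite <- (opp_opp (meet x y)), opp_meet.
  rewrite <- (opp_opp z) at 1.
  rewrite <- opp_add, join_add, opp_join, <- !opp_add, !opp_opp. reflexivity.
Qed.

Lemma meet_add_l x y z : add z (meet x y) = meet (add z x) (add z y).
Proof. rewrite !(add_comm z). apply meet_add. Qed.

Lemma scal_meet t x y : 0 <= t -> scal t (meet x y) = meet (scal t x) (scal t y).
Proof.
  intro Ht. destruct (Req_dec t 0) as [->|Hn].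
  - rewrite !scal_zero_l. symmetry. apply meet_of_le, le_refl.
  - apply le_antisym.
    + apply meet_glb; apply le_scal; auto using meet_lb_l, meet_lb_r.
    + rewrite <- (scal_inv_r t (meet (scal t x) (scal t y))) by exact Hn.
      apply le_scal; auto. apply meet_glb; apply (le_scal_inv t); try lra;
        rewrite scal_inv_r by exact Hn; auto using meet_lb_l, meet_lb_r.
Qed.

Lemma scal_join t x y : 0 <= t -> scal t (join x y) = join (scal t x) (scal t y).
Proof.
  intro Ht. rewrite <- (opp_opp (join x y)), opp_join, scal_opp_r, scal_meet by exact Ht.
  rewrite !scal_opp_r, opp_meet, !opp_opp. reflexivity.
Qed.

Lemma add_join_meet x y : add x y = add (join x y) (meet x y).
Proof.
  set (M := meet (opp x) (opp y)).
  assert (HM : add M (add x y) = meet x y).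
  { unfold M. rewrite meet_add, add_assoc, add_opp_l, add_zero_l,
      (add_comm x y), add_assoc, add_opp_l, add_zero_l.
    apply meet_comm. }
  assert (HJ : join x y = opp M) by (unfold M; rewrite opp_meet, !opp_opp; reflexivity).
  rewrite <- HM, HJ, add_assoc, add_opp_l, add_zero_l. reflexivity.
Qed.

Lemma meet_add_le x y z : le zero x -> le zero y -> le zero z ->
  le (meet x (add y z)) (add (meet x y) (meet x z)).
Proof.
  intros Hx Hy Hz. set (m := meet x (add y z)).
  assert (H1 : le m (add (meet x y) z)).
  { assert (H : le (add m (opp z)) (meet x y)).
    { apply meet_glb.
      - apply le_trans with (add m zero).
        + apply le_add_l. rewrite <- opp_zero. apply le_opp, Hz.
        + rewrite add_zero_r. apply meet_lb_l.
      - rewrite <- (add_subK y z). apply le_add, meet_lb_r. }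
    apply (le_add _ _ z) in H. rewrite add_subKr in H. exact H. }
  assert (H2 : le m (add (meet x y) x)).
  { apply le_trans with x; [apply meet_lb_l|].
    rewrite <- (add_zero_l x) at 1. apply le_add, meet_glb; auto. }
  rewrite (meet_comm x z), meet_add_l. apply meet_glb; auto.
Qed.

Lemma meet_scal_zero p q t : le zero p -> le zero q -> meet p q = zero -> 0 <= t ->
  meet p (scal t q) = zero.
Proof.
  intros Hp Hq H Ht. apply le_antisym.
  - apply le_trans with (meet (scal (1 + t) p) (scal (1 + t) q)).
    + apply meet_mono; [rewrite <- (scal_one p) at 1|]; apply le_scal_r; auto; lra.
    + rewrite <- scal_meet by lra. rewrite H, scal_zero_r. apply le_refl.
  - apply meet_glb; auto. apply le_scal_nonneg; auto.
Qed.

Lemma abs_nonneg x : le zero (ab x).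
Proof.
  unfold absv.
  pose proof (le_add2 _ _ _ _ (join_ub_l x (opp x)) (join_ub_r x (opp x))) as H.
  rewrite add_opp_r, <- (scal_one (join x (opp x))), <- scal_add_distr_r in H.
  apply (le_scal_inv (1 + 1)); [lra|]. rewrite scal_zero_r. exact H.
Qed.

Lemma abs_of_nonneg x : le zero x -> ab x = x.
Proof.
  intro H. unfold absv. rewrite join_comm. apply join_of_le.
  apply le_trans with zero; [|exact H]. rewrite <- opp_zero. apply le_opp, H.
Qed.

Lemma abs_opp x : ab (opp x) = ab x.
Proof. unfold absv. rewrite opp_opp, join_comm. reflexivity. Qed.

Lemma abs_scal t x : ab (scal t x) = scal (Rabs t) (ab x).
Proof.
  destruct (Rle_dec 0 t) as [H|H].
  - rewrite Rabs_right by lra. unfold absv.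
    rewrite scal_join, scal_opp_r by exact H. reflexivity.
  - rewrite Rabs_left by lra.
    replace (scal t x) with (opp (scal (- t) x))
      by (rewrite <- scal_opp_l, Ropp_involutive; reflexivity).
    rewrite abs_opp. unfold absv. rewrite scal_join, scal_opp_r by lra. reflexivity.
Qed.

Lemma abs_triangle x y : le (ab (add x y)) (add (ab x) (ab y)).
Proof.
  unfold absv. apply join_lub.
  - apply le_add2; apply join_ub_l.
  - rewrite opp_add. apply le_add2; apply join_ub_r.
Qed.

Lemma le_abs x : le x (ab x).
Proof. apply join_ub_l. Qed.

Lemma abs_zero : ab zero = zero.
Proof. apply abs_of_nonneg, le_refl. Qed.

Lemma norm_abs x : norm (ab x) = norm x.
Proof.
  assert (E : ab (ab x) = ab x) by apply abs_of_nonneg, abs_nonneg.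
  apply Rle_antisym; apply norm_mono; fold (ab (ab x)) (ab x); rewrite E; apply le_refl.
Qed.

Lemma abs_zero_inv x : ab x = zero -> x = zero.
Proof.
  intro H. apply norm_zero_iff, Rle_antisym; [|apply norm_nonneg].
  rewrite <- norm_zero. apply norm_mono. fold (ab x) (ab (zero : X)).
  rewrite H, abs_zero. apply le_refl.
Qed.

Lemma norm_le x y : le zero x -> le x y -> norm x <= norm y.
Proof.
  intros H1 H2. apply norm_mono. fold (ab x) (ab y).
  rewrite (abs_of_nonneg x H1), (abs_of_nonneg y (le_trans _ _ _ H1 H2)). exact H2.
Qed.

Lemma disjoint_abs_le u v : meet (ab u) (ab v) = zero -> le (ab u) (ab (add u v)).
Proof.
  intro H.
  assert (H1 : le (ab u) (add (ab (add u v)) (ab v))).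
  { rewrite <- (add_subK u v) at 1. rewrite <- (abs_opp v). apply abs_triangle. }
  apply le_trans with (meet (ab u) (add (ab (add u v)) (ab v))).
  { apply meet_glb; [apply le_refl | exact H1]. }
  apply le_trans with (add (meet (ab u) (ab (add u v))) (meet (ab u) (ab v))).
  - apply meet_add_le; apply abs_nonneg.
  - rewrite H, add_zero_r. apply meet_lb_r.
Qed.

Definition ppart x := join x zero.
Definition npart x := join (opp x) zero.

Lemma ppart_nonneg x : le zero (ppart x). Proof. apply join_ub_r. Qed.
Lemma npart_nonneg x : le zero (npart x). Proof. apply join_ub_r. Qed.

Lemma meet_zero_npart x : meet x zero = opp (npart x).
Proof. unfold npart. rewrite opp_join, opp_opp, opp_zero. reflexivity. Qed.

Lemma ppart_npart x : x = add (ppart x) (opp (npart x)).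
Proof.
  rewrite <- meet_zero_npart. unfold ppart.
  rewrite <- add_join_meet, add_zero_r. reflexivity.
Qed.

Lemma ppart_npart_disjoint x : meet (ppart x) (npart x) = zero.
Proof.
  apply (add_cancel_r _ _ (opp (npart x))).
  rewrite meet_add, <- ppart_npart, add_opp_r, add_zero_l. apply meet_zero_npart.
Qed.

(** Archimedean property: if [x <= eps a] for all [eps > 0] then [x <= 0]
    (the norm of [x⁺] is below every [eps ||a||]). *)
Lemma archimedean a x :
  le zero a -> (forall eps, eps > 0 -> le x (scal eps a)) -> le x zero.
Proof.
  intros Ha H.
  assert (Hp : forall eps, eps > 0 -> norm (ppart x) <= eps * norm a).
  { intros eps He. rewrite <- (Rabs_right eps), <- norm_scal by lra. apply norm_le.
    - apply ppart_nonneg.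
    - apply join_lub; [apply H, He | apply le_scal_nonneg; auto; lra]. }
  assert (Hz : norm (ppart x) = 0).
  { pose proof (norm_nonneg (ppart x)). pose proof (norm_nonneg a).
    destruct (Rle_dec (norm (ppart x)) 0); [lra|].
    set (eps := norm (ppart x) / (2 * (norm a + 1))).
    assert (Heps : 0 < eps) by (apply Rdiv_lt_0_compat; lra).
    specialize (Hp _ Heps).
    assert (eps * norm a < norm (ppart x)).
    { apply Rlt_le_trans with (eps * (2 * (norm a + 1))).
      - apply Rmult_lt_compat_l; lra.
      - unfold eps, Rdiv. rewrite Rmult_assoc, Rinv_l by lra. lra. }
    lra. }
  apply norm_zero_iff in Hz. apply le_trans with (ppart x).
  - apply join_ub_l.
  - rewrite Hz. apply le_refl.
Qed.

End VectorLattice.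

(** * Surjective linear isometries *)
Section Isometries.
Context {X : BanachLattice}.
Implicit Types x y : X.

Lemma linear_zero T : is_linear X T -> T zero = zero.
Proof. intros [_ H]. rewrite <- (scal_zero_l zero), H, !scal_zero_l. reflexivity. Qed.

Lemma linear_opp T x : is_linear X T -> T (opp x) = opp (T x).
Proof. intros [_ H]. rewrite <- !scal_m1, H. reflexivity. Qed.

Lemma isometry_inj T x y : surj_lin_isometry X T -> T x = T y -> x = y.
Proof.
  intros [Hl [_ Hn]] H.
  assert (H0 : norm (add x (opp y)) = 0).
  { rewrite <- Hn. pose proof Hl as [Ha _].
    rewrite Ha, linear_opp, H, add_opp_r by exact Hl. apply norm_zero. }
  apply norm_zero_iff in H0. apply (add_cancel_r _ _ (opp y)).
  rewrite H0, add_opp_r. reflexivity.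
Qed.

Lemma isometry_inverse T : surj_lin_isometry X T ->
  exists g, surj_lin_isometry X g /\ forall y, T (g y) = y.
Proof.
  intro HT. pose proof HT as [[Ha Hs] [Hsurj Hn]].
  set (g := fun y => proj1_sig (constructive_indefinite_description _ (Hsurj y))).
  assert (Hg : forall y, T (g y) = y)
    by (intro y; unfold g; destruct constructive_indefinite_description; auto).
  exists g. split; [|exact Hg]. split; [split|split].
  - intros x y. apply (isometry_inj T); auto. rewrite Ha, !Hg. reflexivity.
  - intros c x. apply (isometry_inj T); auto. rewrite Hs, !Hg. reflexivity.
  - intros y. exists (T y). apply (isometry_inj T); auto.
  - intros x. rewrite <- Hn, Hg. reflexivity.
Qed.

Lemma isometry_opp T : surj_lin_isometry X T -> surj_lin_isometry X (fun x => opp (T x)).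
Proof.
  intros [[Ha Hs] [Hsurj Hn]]. split; [split|split].
  - intros x y. rewrite Ha, opp_add. reflexivity.
  - intros c x. rewrite Hs, scal_opp_r. reflexivity.
  - intros y. destruct (Hsurj (opp y)) as [x Hx]. exists x. rewrite Hx, opp_opp. reflexivity.
  - intros x. rewrite norm_opp. apply Hn.
Qed.

End Isometries.

(** * A positive normalised atom

    Throughout, [a] is a positive atom of norm one.  For an element [u] we
    compare [|u|] with multiples [t a]; the largest such [t] plays the role of
    the "[a]-coordinate" of [|u|]. *)
Section Atom.
Context {X : BanachLattice}.
Local Notation ab := (absv X).
Implicit Types x y z u v w k : X.
Variable a : X.
Hypothesis a_nonneg : le zero a.
Hypothesis a_neq0 : a <> zero.
Hypothesis norm_a : norm a = 1.
Hypothesis a_atom :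
  forall v, le zero v /\ le v a -> exists lam, 0 <= lam <= 1 /\ v = scal lam a.

Lemma abs_atom : ab a = a.
Proof. apply abs_of_nonneg, a_nonneg. Qed.

Lemma abs_scal_atom t : 0 <= t -> ab (scal t a) = scal t a.
Proof. intro; apply abs_of_nonneg, le_scal_nonneg; auto. Qed.

Lemma norm_scal_atom t : 0 <= t -> norm (scal t a) = t.
Proof. intro. rewrite norm_scal, norm_a, Rabs_right by lra. ring. Qed.

Lemma scal_atom_le0 t : 0 <= t -> le (scal t a) zero -> t = 0.
Proof.
  intros Ht H. destruct (Req_dec t 0) as [|Hn]; auto. exfalso. apply a_neq0.
  rewrite <- (scal_inv_l t a), (le_antisym _ _ H (le_scal_nonneg t a Ht a_nonneg)) by exact Hn.
  apply scal_zero_r.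
Qed.

Lemma coef_le_norm z t : 0 <= t -> le (scal t a) (ab z) -> t <= norm z.
Proof.
  intros Ht H. rewrite <- (norm_scal_atom t Ht). apply norm_mono.
  fold (ab (scal t a)). rewrite abs_scal_atom; auto.
Qed.

(** The piece below [x] is [t a ∧ x], a multiple of [a] since [a] is an atom. *)
Lemma atom_riesz_split t x y : 0 <= t -> le zero x -> le zero y ->
  le (scal t a) (add x y) ->
  exists s, 0 <= s <= t /\ le (scal s a) x /\ le (scal (t - s) a) y.
Proof.
  intros Ht Hx Hy H. destruct (Req_dec t 0) as [->|Hn].
  { exists 0. rewrite Rminus_0_r, scal_zero_l. repeat split; auto; lra. }
  assert (Hti : 0 <= / t) by (left; apply Rinv_0_lt_compat; lra).
  set (p := meet (scal t a) x).
  destruct (a_atom (scal (/ t) p)) as [lam [Hlam Hv]].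
  { split.
    - apply le_scal_nonneg; auto. apply meet_glb; auto. apply le_scal_nonneg; auto.
    - rewrite <- (scal_inv_l t a) by exact Hn. apply le_scal; auto. apply meet_lb_l. }
  assert (Hp : p = scal (t * lam) a)
    by (rewrite <- scal_assoc, <- Hv, scal_inv_r by exact Hn; reflexivity).
  exists (t * lam). split; [split; nra|]. split.
  - rewrite <- Hp. apply meet_lb_r.
  - assert (Hq : scal (t - t * lam) a = add (scal t a) (opp p)).
    { rewrite Hp, <- scal_opp_l, <- scal_add_distr_r. f_equal; ring. }
    rewrite Hq. apply le_sub0_inv.
    assert (H2 : le (scal t a) (add p y)).
    { unfold p. rewrite meet_add. apply meet_glb; auto.
      rewrite <- (add_zero_r (scal t a)) at 1. apply le_add_l, Hy. }
    apply le_sub0 in H2. rewrite opp_add, opp_opp, (add_comm (opp (scal t a)) p),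
      add_assoc, (add_comm y p). exact H2.
Qed.

Lemma disjoint_coef u v r1 r2 : meet (ab u) (ab v) = zero -> 0 <= r1 -> 0 <= r2 ->
  le (scal r1 a) (ab u) -> le (scal r2 a) (ab v) -> r1 = 0 \/ r2 = 0.
Proof.
  intros H H1 H2 Hu Hv.
  assert (Hm : Rmin r1 r2 = 0).
  { apply scal_atom_le0; [apply Rmin_glb; auto|]. rewrite <- H. apply meet_glb.
    - apply le_trans with (scal r1 a); auto. apply le_scal_r; auto. apply Rmin_l.
    - apply le_trans with (scal r2 a); auto. apply le_scal_r; auto. apply Rmin_r. }
  unfold Rmin in Hm. destruct (Rle_dec r1 r2); lra.
Qed.

Definition perp k := meet (ab k) a = zero.

Lemma perp_disjoint_atom w : perp w -> meet (ab a) (ab w) = zero.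
Proof. intro H. rewrite abs_atom, meet_comm. exact H. Qed.

Lemma perp_coef k r : perp k -> 0 <= r -> le (scal r a) (ab k) -> r = 0.
Proof.
  intros Hk Hr H.
  assert (Hd : meet (ab k) (ab a) = zero) by (rewrite abs_atom; exact Hk).
  assert (Ha1 : le (scal 1 a) (ab a)) by (rewrite abs_atom, scal_one; apply le_refl).
  destruct (disjoint_coef k a r 1 Hd Hr ltac:(lra) H Ha1); lra.
Qed.

Lemma perp_zero : perp zero.
Proof. unfold perp. rewrite abs_zero. apply meet_of_le, a_nonneg. Qed.

Lemma perp_add k1 k2 : perp k1 -> perp k2 -> perp (add k1 k2).
Proof.
  unfold perp. intros H1 H2. apply le_antisym.
  - apply le_trans with (meet (add (ab k1) (ab k2)) a).
    + apply meet_mono; [apply abs_triangle | apply le_refl].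
    + rewrite meet_comm, <- (add_zero_r zero), <- H1 at 1.
      rewrite <- H2, !(meet_comm _ a). apply meet_add_le; auto; apply abs_nonneg.
  - apply meet_glb; auto. apply abs_nonneg.
Qed.

Lemma perp_scal t k : perp k -> perp (scal t k).
Proof.
  unfold perp. intro H. rewrite abs_scal, meet_comm. apply meet_scal_zero; auto.
  - apply abs_nonneg.
  - rewrite meet_comm; auto.
  - apply Rabs_pos.
Qed.

Lemma perp_norm_le k t : perp k -> norm k <= norm (add k (scal t a)).
Proof.
  intro H. apply norm_mono, disjoint_abs_le.
  rewrite abs_scal, abs_atom. apply meet_scal_zero; auto; apply abs_nonneg || apply Rabs_pos.
Qed.

Lemma atom_indecomposable p q : add p q = a -> meet (ab p) (ab q) = zero ->
  p = zero \/ q = zero.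
Proof.
  intros H Hd.
  assert (Hp : le (ab p) a)
    by (rewrite <- abs_atom, <- H; apply disjoint_abs_le, Hd).
  assert (Hq : le (ab q) a).
  { rewrite <- abs_atom, <- H, add_comm. apply disjoint_abs_le. rewrite meet_comm; exact Hd. }
  destruct (a_atom (ab p)) as [l1 [Hl1 E1]]; [split; auto; apply abs_nonneg|].
  destruct (a_atom (ab q)) as [l2 [Hl2 E2]]; [split; auto; apply abs_nonneg|].
  destruct (disjoint_coef p q l1 l2 Hd) as [->| ->]; try lra;
    [rewrite E1; apply le_refl | rewrite E2; apply le_refl | left | right];
    apply abs_zero_inv; [rewrite E1 | rewrite E2]; apply scal_zero_l.
Qed.

(** Here [mu] is the supremum of the [t] with [t a <= u],
    which exists by completeness of [R]; [mu a <= u] by the Archimedean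
    property, and [r ∧ a] is a multiple [nu a] of [a] with [nu = 0] by
    maximality of [mu]. *)
Lemma atom_projection u : le zero u ->
  exists mu, 0 <= mu /\ le (scal mu a) u /\ perp (add u (opp (scal mu a))).
Proof.
  intro Hu.
  set (E := fun t => 0 <= t /\ le (scal t a) u).
  assert (HE0 : E 0) by (split; [lra | rewrite scal_zero_l; exact Hu]).
  assert (Hb : bound E).
  { exists (norm u). intros t [Ht H]. apply coef_le_norm; auto.
    rewrite abs_of_nonneg; auto. }
  destruct (completeness E Hb (ex_intro _ 0 HE0)) as [mu [Hub Hlub]].
  assert (Hmu : 0 <= mu) by (apply Hub, HE0).
  assert (Hle : le (scal mu a) u).
  { assert (H : le (add (scal mu a) (opp u)) zero).
    { apply (archimedean a); auto. intros eps Heps.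
      assert (Ht : exists t, E t /\ mu - eps < t).
      { apply NNPP. intro Hc. assert (mu <= mu - eps); [|lra].
        apply Hlub. intros t Et. apply Rnot_lt_le. intro. apply Hc. exists t. auto. }
      destruct Ht as [t [[Ht0 Ht] Hlt]].
      assert (t <= mu) by (apply Hub; split; auto).
      apply le_trans with (add (scal mu a) (opp (scal t a))).
      - apply le_add_l, le_opp, Ht.
      - rewrite <- scal_opp_l, <- scal_add_distr_r. apply le_scal_r; auto. lra. }
    apply (le_add _ _ u) in H. rewrite add_subKr, add_zero_l in H. exact H. }
  exists mu. split; [exact Hmu|]. split; [exact Hle|].
  set (r := add u (opp (scal mu a))).
  assert (Hr : le zero r) by (apply le_sub0, Hle).
  unfold perp. rewrite abs_of_nonneg by exact Hr.
  destruct (a_atom (meet r a)) as [nu [Hnu Heq]].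
  { split; [apply meet_glb; auto | apply meet_lb_r]. }
  destruct (Req_dec nu 0) as [->|Hn].
  { rewrite Heq, scal_zero_l. reflexivity. }
  assert (HE : E (mu + nu)).
  { split; [lra|]. rewrite scal_add_distr_r, <- (add_subKr u (scal mu a)),
      (add_comm (scal mu a)).
    apply le_add. rewrite <- Heq. apply meet_lb_l. }
  apply Hub in HE. lra.
Qed.

Lemma one_dimensional_of_trivial_perp :
  (forall k, perp k -> k = zero) -> one_dimensional X.
Proof.
  intro Htriv. exists a. split; [exact a_neq0|]. intro x.
  assert (Hpos : forall u, le zero u -> exists mu, u = scal mu a).
  { intros u Hu. destruct (atom_projection u Hu) as [mu [_ [_ Hk]]].
    exists mu. apply (add_cancel_r _ _ (opp (scal mu a))).
    rewrite add_opp_r. apply Htriv, Hk. }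
  destruct (Hpos _ (ppart_nonneg x)) as [m1 E1].
  destruct (Hpos _ (npart_nonneg x)) as [m2 E2].
  exists (m1 - m2). rewrite (ppart_npart x), E1, E2, <- scal_opp_l, <- scal_add_distr_r.
  reflexivity.
Qed.


Lemma conv_decomp (P : X -> Prop) :
  (forall v, P v -> (v = a \/ v = opp a \/ perp v) /\ norm v <= 1) ->
  forall l : list (R * X), (forall pr, In pr l -> 0 <= fst pr /\ P (snd pr)) ->
  exists s k, lin_comb X l = add (scal s a) k /\ perp k /\
    Rabs s + norm k <= fold_right Rplus 0 (map fst l).
Proof.
  intros HP l. induction l as [|[lam v] l IH]; intros Hl.
  { exists 0, zero. simpl. rewrite scal_zero_l, add_zero_l, Rabs_R0, norm_zero.
    repeat split; [apply perp_zero | lra]. }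
  destruct IH as [s [k [E [Hk Hb]]]]; [intros p Hp; apply Hl; right; exact Hp|].
  destruct (Hl (lam, v)) as [Hlam HPv]; [left; reflexivity|]. simpl in Hlam, HPv.
  destruct (HP v HPv) as [Hv Hnv].
  change (lin_comb X ((lam, v) :: l)) with (add (scal lam v) (lin_comb X l)).
  change (fold_right Rplus 0 (map fst ((lam, v) :: l)))
    with (lam + fold_right Rplus 0 (map fst l)).
  rewrite E. pose proof (Rabs_triang lam s). pose proof (Rabs_triang (- lam) s).
  rewrite Rabs_Ropp in *. rewrite (Rabs_right lam) in * by lra.
  destruct Hv as [->|[->|Hv]].
  - exists (lam + s), k. rewrite add_assoc, <- scal_add_distr_r. repeat split; auto. lra.
  - exists (- lam + s), k.
    rewrite add_assoc, scal_opp_r, <- scal_opp_l, <- scal_add_distr_r.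
    repeat split; auto. lra.
  - exists s, (add (scal lam v) k). split; [apply add_swap|].
    split; [apply perp_add; auto; apply perp_scal; auto|].
    pose proof (norm_triangle (scal lam v) k). rewrite norm_scal, Rabs_right in * by lra.
    nra.
Qed.

Lemma conv_coef_bound (P : X -> Prop) (B : R) : 0 <= B ->
  (forall v, P v -> forall r, 0 <= r -> le (scal r a) (ab v) -> r <= B) ->
  forall l : list (R * X), (forall pr, In pr l -> 0 <= fst pr /\ P (snd pr)) ->
  forall t, 0 <= t -> le (scal t a) (ab (lin_comb X l)) ->
  t <= B * fold_right Rplus 0 (map fst l).
Proof.
  intros HB HP l. induction l as [|[lam v] l IH]; intros Hl t Ht H.
  { simpl in *. rewrite abs_zero in H. apply (scal_atom_le0 t Ht) in H. lra. }
  destruct (Hl (lam, v)) as [Hlam HPv]; [left; reflexivity|]. simpl in Hlam, HPv.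
  change (lin_comb X ((lam, v) :: l)) with (add (scal lam v) (lin_comb X l)) in H.
  change (fold_right Rplus 0 (map fst ((lam, v) :: l)))
    with (lam + fold_right Rplus 0 (map fst l)).
  destruct (atom_riesz_split t (ab (scal lam v)) (ab (lin_comb X l)) Ht
              (abs_nonneg _) (abs_nonneg _) (le_trans _ _ _ H (abs_triangle _ _)))
    as [s [Hs [H1 H2]]].
  assert (Hrest : t - s <= B * fold_right Rplus 0 (map fst l)).
  { apply IH; auto; [intros p Hp; apply Hl; right; exact Hp | lra]. }
  assert (Hhead : s <= lam * B).
  { rewrite abs_scal, Rabs_right in H1 by lra.
    destruct (Req_dec lam 0) as [->|Hn].
    { rewrite scal_zero_l in H1. apply (scal_atom_le0 s) in H1; lra. }
    assert (Hli : 0 <= / lam) by (left; apply Rinv_0_lt_compat; lra).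
    assert (/ lam * s <= B).
    { apply (HP v HPv); [apply Rmult_le_pos; lra|].
      apply (le_scal (/ lam)) in H1; [|exact Hli].
      rewrite scal_assoc, scal_inv_l in H1 by exact Hn. exact H1. }
    apply (Rmult_le_compat_l lam) in H0; [|lra].
    rewrite <- Rmult_assoc, Rinv_r, Rmult_1_l in H0 by exact Hn. lra. }
  nra.
Qed.

(** ** The orbit of the atom *)
Hypothesis isometries_preserve_disjointness :
  forall T : X -> X, surj_lin_isometry X T -> disjointness_preserving X T.

(** The image of [a] under an isometry [T] is still indecomposable: apply
    [atom_indecomposable] to the preimages under [T], which are disjoint
    because [T^-1] preserves disjointness. *)
Lemma isometry_image_indecomposable T p q : surj_lin_isometry X T ->
  add p q = T a -> meet (ab p) (ab q) = zero -> p = zero \/ q = zero.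
Proof.
  intros HT H Hd. destruct (isometry_inverse T HT) as [g [Hg HTg]].
  assert (Hga : g (T a) = a) by (apply (isometry_inj T); auto).
  pose proof Hg as [[Hgadd _] _].
  destruct (atom_indecomposable (g p) (g q)) as [E|E].
  - rewrite <- Hgadd, H. exact Hga.
  - apply (isometries_preserve_disjointness g Hg). exact Hd.
  - left. rewrite <- (HTg p), E. apply linear_zero, HT.
  - right. rewrite <- (HTg q), E. apply linear_zero, HT.
Qed.

(** A positive image [T a] is [a] itself or lies in [a^⊥]: split
    [T a = (T a - mu a) + mu a] along [atom_projection]. *)
Lemma orbit_of_atom_nonneg T : surj_lin_isometry X T -> le zero (T a) ->
  T a = a \/ perp (T a).
Proof.
  intros HT Hu. destruct (atom_projection (T a) Hu) as [mu [Hmu [Hle Hk]]].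
  set (r := add (T a) (opp (scal mu a))) in *.
  destruct (isometry_image_indecomposable T r (scal mu a) HT) as [E|E].
  - apply add_subKr.
  - rewrite abs_scal_atom by exact Hmu. apply meet_scal_zero; auto. apply abs_nonneg.
  - left. assert (HTa : T a = scal mu a).
    { apply (add_cancel_r _ _ (opp (scal mu a))). fold r. rewrite E, add_opp_r. reflexivity. }
    assert (Hmu1 : mu = 1).
    { destruct HT as [_ [_ Hn]]. rewrite <- (norm_scal_atom mu Hmu), <- HTa, Hn. exact norm_a. }
    rewrite HTa, Hmu1, scal_one. reflexivity.
  - right. replace (T a) with r; [exact Hk|].
    unfold r. rewrite E, opp_zero, add_zero_r. reflexivity.
Qed.

(** Every isometry maps [a] to [a], to [-a], or into [a^⊥]: [T a] is the sum
    of the disjoint elements [(T a)⁺] and [-(T a)⁻], so it is positive or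
    negative, and [orbit_of_atom_nonneg] applies to [T] or [-T]. *)
Lemma orbit_of_atom T : surj_lin_isometry X T ->
  T a = a \/ T a = opp a \/ perp (T a).
Proof.
  intro HT. set (u := T a).
  destruct (isometry_image_indecomposable T (ppart u) (opp (npart u)) HT) as [E|E].
  - symmetry; apply ppart_npart.
  - rewrite abs_opp, !abs_of_nonneg by (apply ppart_nonneg || apply npart_nonneg).
    apply ppart_npart_disjoint.
  - assert (Hu : u = opp (npart u))
      by (rewrite (ppart_npart u) at 1; rewrite E, add_zero_l; reflexivity).
    destruct (orbit_of_atom_nonneg (fun x => opp (T x)) (isometry_opp T HT)) as [H|H].
    + fold u. rewrite Hu, opp_opp. apply npart_nonneg.
    + right; left. fold u in H. rewrite <- H, opp_opp. reflexivity.
    + right; right. fold u in H. rewrite <- (opp_opp u), <- scal_m1. apply perp_scal, H.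
  - assert (Hu : u = ppart u)
      by (rewrite (ppart_npart u) at 1; rewrite E, add_zero_r; reflexivity).
    destruct (orbit_of_atom_nonneg T HT) as [H|H]; auto.
    fold u. rewrite Hu. apply ppart_nonneg.
Qed.

(** ** Ruling out a nonzero element of [a^⊥]

    With [n = ||a + w||] and [z = (a + w)/n], convex-transitivity
    at [a] gives [n >= 2] while convex-transitivity at [z] gives [n < 2]. *)
Hypothesis convex_trans : convex_transitive X.

Section NormalisedPerp.
Variable w : X.
Hypothesis w_perp : perp w.
Hypothesis norm_w : norm w = 1.

Let n := norm (add a w).
Let z := scal (/ n) (add a w).

Lemma one_le_norm_sum : 1 <= n.
Proof.
  unfold n. rewrite <- norm_a. apply norm_mono, disjoint_abs_le, perp_disjoint_atom, w_perp.
Qed.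

Lemma inv_norm_sum_pos : 0 < / n.
Proof. pose proof one_le_norm_sum. apply Rinv_0_lt_compat. lra. Qed.

Lemma norm_z : norm z = 1.
Proof.
  pose proof one_le_norm_sum. pose proof inv_norm_sum_pos.
  unfold z. rewrite norm_scal, Rabs_right by lra. fold n. field. lra.
Qed.

(** [|z| >= (1/n) a], since [|a + w| >= |a|] by disjointness. *)
Lemma atom_le_abs_z : le (scal (/ n) a) (ab z).
Proof.
  pose proof inv_norm_sum_pos.
  unfold z. rewrite abs_scal, Rabs_right by lra. apply le_scal; [lra|].
  rewrite <- abs_atom at 1. apply disjoint_abs_le, perp_disjoint_atom, w_perp.
Qed.

Lemma atom_coef_of_approx s k : perp k ->
  / n <= Rabs s + norm (sub X z (add (scal s a) k)).
Proof.
  intro Hk. pose proof inv_norm_sum_pos.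
  set (e := sub X z (add (scal s a) k)).
  assert (Hz : z = add (add (scal s a) e) k).
  { rewrite <- add_assoc, (add_comm e k), add_assoc. unfold e, sub.
    rewrite (add_comm (add (scal s a) k)), add_subKr. reflexivity. }
  assert (H1 : le (scal (/ n) a) (add (ab (add (scal s a) e)) (ab k))).
  { apply le_trans with (1 := atom_le_abs_z). rewrite Hz at 1. apply abs_triangle. }
  destruct (atom_riesz_split (/ n) _ _ ltac:(lra) (abs_nonneg _) (abs_nonneg _) H1)
    as [s1 [Hs1 [H2 H3]]].
  assert (Hs1n : / n - s1 = 0) by (apply (perp_coef k); auto; lra).
  destruct (atom_riesz_split s1 (ab (scal s a)) (ab e) (proj1 Hs1) (abs_nonneg _)
              (abs_nonneg _) (le_trans _ _ _ H2 (abs_triangle _ _)))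
    as [s2 [Hs2 [H4 H5]]].
  apply coef_le_norm in H4; [|lra]. apply coef_le_norm in H5; [|lra].
  rewrite norm_scal, norm_a in H4. lra.
Qed.

Lemma perp_norm_of_approx s k : perp k ->
  / n <= norm k + norm (sub X z (add (scal s a) k)).
Proof.
  intro Hk. pose proof inv_norm_sum_pos.
  set (u := add (scal (/ n) w) (opp k)).
  assert (Hu : perp u).
  { apply perp_add; [apply perp_scal, w_perp | rewrite <- scal_m1; apply perp_scal, Hk]. }
  assert (He : sub X z (add (scal s a) k) = add u (scal (/ n - s) a)).
  { unfold sub, u, z, Rminus.
    rewrite scal_add_distr_l, scal_add_distr_r, scal_opp_l, opp_add, add_addACA, add_comm.
    reflexivity. }
  assert (Hnu : norm u <= norm (sub X z (add (scal s a) k)))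
    by (rewrite He; apply perp_norm_le, Hu).
  assert (Hwn : norm (add u k) = / n).
  { unfold u. rewrite add_subKr, norm_scal, norm_w, Rabs_right by lra. ring. }
  pose proof (norm_triangle u k). lra.
Qed.

(** Convex-transitivity at [a]: [z] is a limit of convex combinations
    [s a + k] of the orbit of [a] with [|s| + ||k|| <= 1]
    ([orbit_of_atom], [conv_decomp]), so [2/n <= 1]. *)
Lemma two_le_norm_sum : 2 <= n.
Proof.
  pose proof one_le_norm_sum.
  assert (Happrox : forall eps, eps > 0 -> 2 * / n <= 1 + 2 * eps).
  { intros eps Heps.
    destruct (proj2 (convex_trans a norm_a z) (Req_le _ _ norm_z) eps Heps)
      as [c [[l [Hl [Hsum Hc]]] He]].
    destruct (conv_decomp (fun v => exists T, surj_lin_isometry X T /\ v = T a))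
      with (l := l) as [s [k [Ec [Hk Hb]]]]; [|exact Hl|].
    { intros v [T [HT ->]]. split; [apply orbit_of_atom, HT|].
      destruct HT as [_ [_ Hn]]. rewrite Hn, norm_a. lra. }
    rewrite Hsum in Hb. rewrite Hc, Ec in He.
    pose proof (atom_coef_of_approx s k Hk). pose proof (perp_norm_of_approx s k Hk).
    lra. }
  assert (H2 : 2 * / n <= 1).
  { apply Rnot_lt_le. intro Hlt. pose proof (Happrox ((2 * / n - 1) / 4) ltac:(lra)). lra. }
  apply (Rmult_le_compat_r n) in H2; [|lra].
  rewrite Rmult_assoc, Rinv_l, Rmult_1_r, Rmult_1_l in H2 by lra. exact H2.
Qed.

(** Each [T z = (T a + T w)/n] is [1/n] times a sum of two disjoint elements
    of norm one, so [|T z|] dominates [r a] only for [r <= 1/n]. *)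
Lemma orbit_z_coef T r : surj_lin_isometry X T -> 0 <= r ->
  le (scal r a) (ab (T z)) -> r <= / n.
Proof.
  intros HT Hr H. pose proof one_le_norm_sum as Hn1. pose proof inv_norm_sum_pos as Hn0.
  pose proof HT as [[Hadd Hs] [_ Hn]].
  assert (HTz : T z = scal (/ n) (add (T a) (T w)))
    by (unfold z; rewrite Hs, Hadd; reflexivity).
  rewrite HTz, abs_scal, Rabs_right in H by lra.
  apply (le_scal n) in H; [|lra]. rewrite !scal_assoc, Rinv_r, scal_one in H by lra.
  destruct (atom_riesz_split (n * r) _ _ ltac:(nra) (abs_nonneg _) (abs_nonneg _)
              (le_trans _ _ _ H (abs_triangle _ _))) as [r1 [Hr1 [H1 H2]]].
  assert (Hd : meet (ab (T a)) (ab (T w)) = zero).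
  { apply (isometries_preserve_disjointness T HT), perp_disjoint_atom, w_perp. }
  pose proof (coef_le_norm _ r1 (proj1 Hr1) H1) as H1'.
  pose proof (coef_le_norm _ (n * r - r1) ltac:(lra) H2) as H2'.
  rewrite Hn, norm_a in H1'. rewrite Hn, norm_w in H2'.
  assert (Hnr : n * r <= 1).
  { destruct (disjoint_coef _ _ r1 (n * r - r1) Hd (proj1 Hr1) ltac:(lra) H1 H2); lra. }
  apply (Rmult_le_reg_l n); [lra|]. rewrite Rinv_r by lra. lra.
Qed.

(** Convex-transitivity at [z]: [a = c + e] with [c] a convex combination of
    the orbit of [z] and [||e|| < (1 - 1/n)/2].  Splitting [a <= |c| + |e|]
    gives [1 <= 1/n + ||e||] ([conv_coef_bound], [orbit_z_coef]), which is
    impossible when [n >= 2]. *)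
Lemma norm_sum_lt_two : n < 2.
Proof.
  destruct (Rlt_le_dec n 2) as [|Hn2]; [assumption|exfalso].
  assert (Hinv : / n <= / 2) by (apply Rinv_le_contravar; lra).
  pose proof inv_norm_sum_pos.
  assert (Hcl : closure X (conv X (fun v => exists T, surj_lin_isometry X T /\ v = T z)) a)
    by (apply (convex_trans z norm_z a); lra).
  destruct (Hcl ((1 - / n) / 2)) as [c [[l [Hl [Hsum Hc]]] He]]; [lra|].
  set (e := sub X a c) in *.
  assert (H1 : le (scal 1 a) (add (ab c) (ab e))).
  { rewrite scal_one. apply le_trans with (ab a); [apply le_abs|].
    replace a with (add c e) at 1 by (unfold e, sub; rewrite add_comm, add_subKr; reflexivity).
    apply abs_triangle. }
  destruct (atom_riesz_split 1 _ _ ltac:(lra) (abs_nonneg _) (abs_nonneg _) H1)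
    as [s [Hs [H2 H3]]].
  assert (Hs1 : s <= / n * 1).
  { rewrite <- Hsum.
    apply (conv_coef_bound (fun v => exists T, surj_lin_isometry X T /\ v = T z) (/ n));
      [lra | | exact Hl | lra | rewrite <- Hc; exact H2].
    intros v [T [HT ->]] r. exact (orbit_z_coef T r HT). }
  pose proof (coef_le_norm _ (1 - s) ltac:(lra) H3). lra.
Qed.

End NormalisedPerp.

Lemma perp_trivial k : perp k -> k = zero.
Proof.
  intro Hk. apply NNPP. intro Hk0.
  assert (Hnk : 0 < norm k).
  { destruct (norm_nonneg k) as [|E]; [assumption|].
    exfalso. apply Hk0, norm_zero_iff. symmetry. exact E. }
  set (w := scal (/ norm k) k).
  assert (Hw : perp w) by apply perp_scal, Hk.
  assert (Hnw : norm w = 1).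
  { unfold w. rewrite norm_scal, Rabs_right. field. lra.
    left; apply Rinv_0_lt_compat, Hnk. }
  pose proof (two_le_norm_sum w Hw Hnw). pose proof (norm_sum_lt_two w Hw Hnw). lra.
Qed.

End Atom.

Theorem theorem4p2 (X : BanachLattice) :
  convex_transitive X ->
  (forall T : X -> X, surj_lin_isometry X T -> disjointness_preserving X T) ->
  (exists x : X, norm x = 1 /\ atom X x) ->
  one_dimensional X.
Proof.
  intros Hct Hdp [x [Hx1 [Hx0 Hxat]]].
  set (a := absv X x).
  assert (Ha0 : le zero a) by apply abs_nonneg.
  assert (Ha : a <> zero) by (intro H; apply Hx0, abs_zero_inv, H).
  assert (Hna : norm a = 1) by (unfold a; rewrite norm_abs; exact Hx1).
  assert (Hat : forall v, le zero v /\ le v a ->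
                  exists lam, 0 <= lam <= 1 /\ v = scal lam a)
    by (intros v Hv; apply Hxat, Hv).
  apply (one_dimensional_of_trivial_perp a); auto.
  intros k Hk. apply (perp_trivial a); auto.
Qed.
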